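(* Let $\nu\in\mathbb{Z}_{\ge0}\cup\{\infty\}$ be a changepoint, $T$ a random sequence length and $\tau$ a detection time; let $\Delta\tau:=\tau-\nu$, $\Delta T:=T-\nu$ and $\Delta T^*_{\max}:=\inf\{t\mid P(\Delta T\le t)=1\}<\infty$. Assume (independent censoring) that conditionally on $\{\nu<\infty,\Delta\tau\ge0\}$, $\Delta\tau$ and $\Delta T$ are independent. Then $$\mathbb{E}[\Delta\tau\mid\nu<\infty,\ 0\le\Delta\tau\le\Delta T^*_{\max}]-\mathbb{E}[\Delta\tau\mid\nu<\infty,\ 0\le\Delta\tau\le\Delta T]\ge0.$$
   Context: $\tau$ is the detection time of an online changepoint detector; all conditional expectations are assumed well defined (conditioning events of positive probability). *)

From HB Require Import structures.
From mathcomp Require Import all_boot all_order all_algebra.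
From mathcomp Require Import all_classical all_reals all_analysis.
Set Implicit Arguments. Unset Strict Implicit. Unset Printing Implicit Defensive.
Import Order.TTheory GRing.Theory Num.Theory.
Local Open Scope classical_set_scope.
Local Open Scope ring_scope.

(* The changepoint nu takes values in N u {oo},
   modelled as [option nat] (None = oo).  T and tau are nat-valued. *)

Section Defs.
Context {d : measure_display} {Omega : measurableType d} {R : realType}.

Definition level_measurable {X : Type} (f : Omega -> X) : Prop :=
  forall x : X, measurable [set w | f w = x].

Definition delta (s : Omega -> nat) (nu : Omega -> option nat) : Omega -> \bar R :=
  fun w => match nu w with
           | Some n => ((s w)%:R - n%:R)%:E
           | None => -oo%E
           end.

Definition ess_max (P : probability Omega R) (X : Omega -> \bar R) : \bar R :=
  ereal_inf [set t%:E | t in [set t : R | P [set w | (X w <= t%:E)%E] = 1%E]].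

Definition cond_exp (P : probability Omega R) (A : set Omega) (X : Omega -> \bar R)
  : \bar R := ((\int[P]_(w in A) X w) * ((fine (P A))^-1)%:E)%E.

Definition cond_indep (P : probability Omega R) (B : set Omega)
  (X Y : Omega -> \bar R) : Prop :=
  forall S1 S2 : set (\bar R),
    (P (B `&` X @^-1` S1 `&` Y @^-1` S2) * P B
     = P (B `&` X @^-1` S1) * P (B `&` Y @^-1` S2))%E.

End Defs.

From HB Require Import structures.
From mathcomp Require Import all_boot all_order all_algebra.
From mathcomp Require Import all_classical all_reals all_analysis.
From mathcomp Require Import ring lra measurable_realfun.
Import Order.TTheory GRing.Theory Num.Theory.
Local Open Scope classical_set_scope.
Local Open Scope ring_scope.

(* Given B = {nu < oo, 0 <= tau - nu}, the delay tau - nu is N-valued with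
   law p k = P(B, tau - nu = k).  As T - nu <= M := ess max (T - nu) < oo
   almost surely, both conditioning events only involve the values
   k <= K := floor M: on {tau - nu <= M} the delay has law p, while on
   {tau - nu <= T - nu} independence gives the law p k * S k, where
   S k = P(T - nu >= k | B) is nonincreasing in k.  Reweighting a law on
   0..K by a nonincreasing factor can only lower its mean (Chebyshev's sum
   inequality). *)

Section level_measurable.
Context {d : measure_display} {Omega : measurableType d}.

Lemma level_measurable_pair {X Y : Type} {f : Omega -> X} {g : Omega -> Y} :
  level_measurable f -> level_measurable g ->
  level_measurable (fun w => (f w, g w)).
Proof.
move=> mf mg [x y].
rewrite [X in measurable X](_ : _ = [set w | f w = x] `&` [set w | g w = y]).
  exact: measurableI.
by apply/seteqP; split => [w /= [<- <-]|w [/= -> ->]].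
Qed.

Lemma saturated_measurable (C : countType) (f : Omega -> C) (S : set Omega) :
  level_measurable f -> (forall w w', f w = f w' -> S w -> S w') ->
  measurable S.
Proof.
move=> mf satS.
have -> : S = \bigcup_(c in f @` S) f @^-1` [set c].
  apply/seteqP; split => [w Sw|w [_ [w' Sw' <-] /= fw]]; first by exists (f w).
  exact: satS Sw'.
rewrite bigcup_mkcond; apply: countable_bigcupT_measurable => [|c].
  exact: countableP.
by case: ifP => // _; exact: mf.
Qed.

End level_measurable.

Section nat_valued.
Context {d : measure_display} {Omega : measurableType d} {R : realType}.
Context {mu : {measure set Omega -> \bar R}} {A : set Omega}
  {X : Omega -> \bar R} {K : nat}.
Hypotheses (mA : measurable A) (mX : measurable_fun A X)
  (X_nat : forall w, A w -> exists k : nat, X w = k%:R%:E)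
  (X_le_K : mu (A `&` [set w | (K%:R%:E < X w)%E]) = 0%E).

Let level (k : nat) := A `&` [set w | X w = k%:R%:E].
Let window := \big[setU/set0]_(0 <= k < K.+1) level k.
Let tail := A `&` [set w | (K%:R%:E < X w)%E].

Let measurable_level k : measurable (level k).
Proof. exact: mX mA _ (emeasurable_set1 _). Qed.

Let measurable_window : measurable window.
Proof. exact: bigsetU_measurable. Qed.

Let measurable_tail : measurable tail.
Proof.
have := mX mA _ (emeasurable_itv `]K%:R%:E, +oo%E]); congr measurable.
by apply/seteqP; split => w [Aw]; rewrite /= in_itv /= leey andbT.
Qed.

Let trivIset_level : trivIset setT level.
Proof.
move=> i j _ _ [w [[_ /= Xi] [_ /= Xj]]].
by apply/eqP; rewrite -(eqr_nat R) -eqe -Xi -Xj.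
Qed.

Let X_ge0 w : A w -> (0 <= X w)%E.
Proof. by case/X_nat => k ->; rewrite lee_fin. Qed.

Let window_tail_partition : A = window `|` tail.
Proof.
apply/seteqP; split => [w Aw|w]; last first.
  by case=> [|[]//]; rewrite /window -bigcup_seq => -[k _ []].
have [k Xk] := X_nat _ Aw.
have [kK|Kk] := leqP k K.
  by left; rewrite /window -bigcup_seq; exists k; rewrite //= mem_index_iota ltnS.
by right; split => //=; rewrite Xk lte_fin ltr_nat.
Qed.

Let window_tail_disjoint : [disjoint window & tail].
Proof.
rewrite disj_set2E; apply/eqP/seteqP; split => // w [].
rewrite /window -bigcup_seq => -[k /=].
rewrite mem_index_iota ltnS => /andP[_ kK].
by move=> [_ /= Xk] [_ /=]; rewrite Xk lte_fin ltr_nat ltnNge kK.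
Qed.

Let window_sub : window `<=` A.
Proof. by rewrite [X in _ `<=` X]window_tail_partition; exact: subsetUl. Qed.

Lemma integral_nat_window :
  (\int[mu]_(w in A) X w = \sum_(k < K.+1) k%:R%:E * mu (level k))%E.
Proof.
rewrite window_tail_partition ge0_integral_setU //.
all: try by rewrite -window_tail_partition.
rewrite (null_set_integral measurable_tail) ?adde0 //; last first.
  by apply: (measurable_funS mA _ mX); exact: subIsetl.
rewrite ge0_integral_bigsetU ?iota_uniq //; last 3 first.
- exact: sub_trivIset trivIset_level.
- exact: measurable_funS mA window_sub mX.
- by move=> w /window_sub /X_ge0.
rewrite big_mkord; apply: eq_bigr => k _; rewrite -integral_cst //.
by apply: eq_integral => w /[!inE] -[_ ->].
Qed.

Lemma measure_nat_window : mu A = (\sum_(k < K.+1) mu (level k))%E.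
Proof.
by rewrite window_tail_partition measureU0 // /window big_mkord measure_bigsetU.
Qed.

End nat_valued.

Definition level_prob {d : measure_display} {Omega : measurableType d}
  {R : realType} (P : probability Omega R) (A : set Omega)
  (X : Omega -> \bar R) (k : nat) : R :=
  fine (P (A `&` [set w | X w = k%:R%:E])).

Section nat_valued_probability.
Context {d : measure_display} {Omega : measurableType d} {R : realType}.
Context {P : probability Omega R} {A : set Omega}
  {X : Omega -> \bar R} {K : nat}.
Hypotheses (mA : measurable A) (mX : measurable_fun A X)
  (X_nat : forall w, A w -> exists k : nat, X w = k%:R%:E)
  (X_le_K : P (A `&` [set w | (K%:R%:E < X w)%E]) = 0%E).

Let level_probE k :
  P (A `&` [set w | X w = k%:R%:E]) = (level_prob P A X k)%:E.
Proof.
by rewrite fineK // fin_num_measure //; exact: mX mA _ (emeasurable_set1 _).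
Qed.

Lemma prob_nat_window : P A = (\sum_(k < K.+1) level_prob P A X k)%:E.
Proof.
rewrite (measure_nat_window mA mX X_nat X_le_K) -sumEFin.
by apply: eq_bigr => k _; exact: level_probE.
Qed.

Lemma cond_exp_nat_window : cond_exp P A X =
  ((\sum_(k < K.+1) k%:R * level_prob P A X k) /
   (\sum_(k < K.+1) level_prob P A X k))%:E.
Proof.
rewrite /cond_exp (integral_nat_window mA mX X_nat X_le_K) prob_nat_window /=.
rewrite EFinM -sumEFin; congr (_ * _)%E; apply: eq_bigr => k _.
by rewrite EFinM; congr (_ * _)%E; exact: level_probE.
Qed.

End nat_valued_probability.

Lemma reweighted_mean_le_nonincr (R : realFieldType) (n : nat) (p h : nat -> R) :
  (forall k, 0 <= p k) -> (forall k, 0 <= h k) ->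
  (forall i j, (i <= j)%N -> h j <= h i) ->
  (\sum_(k < n) k%:R * (p k * h k)) / (\sum_(k < n) p k * h k)
    <= (\sum_(k < n) k%:R * p k) / (\sum_(k < n) p k).
Proof.
move=> p_ge0 h_ge0 h_nonincr.
have ph_ge0 k : 0 <= p k * h k by rewrite mulr_ge0.
have [ph0|ph_neq0] := eqVneq (\sum_(k < n) p k * h k) 0.
  by rewrite ph0 invr0 mulr0 divr_ge0 ?sumr_ge0 // => k _; rewrite mulr_ge0.
have ph_gt0 : 0 < \sum_(k < n) p k * h k by rewrite lt_def ph_neq0 sumr_ge0.
have p_gt0 : 0 < \sum_(k < n) p k.
  rewrite lt_def sumr_ge0 // andbT; apply: contraNneq ph_neq0 => p0.
  by apply/eqP/big1 => k _; rewrite (psumr_eq0P _ p0) ?mul0r.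
rewrite ler_pdivrMr // mulrAC ler_pdivlMr // -subr_ge0.
set D := \sum_(i < n) \sum_(j < n) i%:R * p i * p j * (h j - h i).
have -> : (\sum_(k < n) k%:R * p k) * (\sum_(k < n) p k * h k)
   - (\sum_(k < n) k%:R * (p k * h k)) * (\sum_(k < n) p k) = D.
  rewrite !big_distrl /= -sumrB; apply: eq_bigr => i _.
  rewrite !big_distrr /= -sumrB; apply: eq_bigr => j _; ring.
(* symmetrising D in (i, j) exhibits it as half a sum of nonnegative terms *)
have DD : D + D = \sum_(i < n) \sum_(j < n)
                    p i * p j * ((i%:R - j%:R) * (h j - h i)).
  rewrite {2}/D exchange_big /= -big_split /=; apply: eq_bigr => i _.
  rewrite -big_split /=; apply: eq_bigr => j _; ring.
suff : 0 <= D + D by lra.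
rewrite DD; apply: sumr_ge0 => i _; apply: sumr_ge0 => j _.
apply: mulr_ge0; first exact: mulr_ge0.
have [ij|/ltnW ji] := leqP i j.
  by apply: mulr_le0; rewrite subr_le0 ?ler_nat ?h_nonincr.
by apply: mulr_ge0; rewrite subr_ge0 ?ler_nat ?h_nonincr.
Qed.

Section delta_ess_max.
Context {d : measure_display} {Omega : measurableType d} {R : realType}.

Lemma delta_nat {s : Omega -> nat} {nu : Omega -> option nat} {w : Omega} :
  nu w <> None -> (0 <= delta (R:=R) s nu w)%E ->
  exists k : nat, delta (R:=R) s nu w = k%:R%:E.
Proof.
rewrite /delta; case: (nu w) => [n _|//].
by rewrite lee_fin subr_ge0 ler_nat => ns; exists (s w - n)%N; rewrite natrB.
Qed.

Lemma ess_max_lt_null (P : probability Omega R) (Y : Omega -> \bar R) (r : R) :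
  (forall t : R, measurable [set w | (Y w <= t%:E)%E]) ->
  measurable [set w | (r%:E <= Y w)%E] ->
  (ess_max P Y < r%:E)%E -> P [set w | (r%:E <= Y w)%E] = 0%E.
Proof.
move=> mY mYr /ereal_inf_lt[_ [t /= PYt <-]]; rewrite lte_fin => tr.
have PYgt : P (~` [set w | (Y w <= t%:E)%E]) = 0%E.
  by rewrite probability_setC // PYt subee.
apply/eqP; rewrite eq_le measure_ge0 andbT -PYgt.
apply: le_measure; rewrite ?inE //; first exact: measurableC.
by move=> w /= rY Yt; move: (le_trans rY Yt); rewrite lee_fin leNgt tr.
Qed.

End delta_ess_max.

Definition cond_survival {d : measure_display} {Omega : measurableType d}
  {R : realType} (P : probability Omega R) (B : set Omega)
  (Y : Omega -> \bar R) (k : nat) : R :=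
  fine (P (B `&` [set w | (k%:R%:E <= Y w)%E])) / fine (P B).

Section changepoint.
Context {d : measure_display} {Omega : measurableType d} {R : realType}.
Context {P : probability Omega R} {nu : Omega -> option nat}
  {T tau : Omega -> nat}.
Hypotheses (mnu : level_measurable nu) (mT : level_measurable T)
  (mtau : level_measurable tau).

Let X := delta (R:=R) tau nu.
Let Y := delta (R:=R) T nu.
Let B := [set w | nu w <> None /\ (0 <= X w)%E].
Let A1 := [set w | nu w <> None /\ (0 <= X w)%E /\ (X w <= ess_max P Y)%E].
Let A2 := [set w | nu w <> None /\ (0 <= X w)%E /\ (X w <= Y w)%E].

Lemma changepoint_measurable (S : set Omega) :
  (forall w w', nu w = nu w' -> T w = T w' -> tau w = tau w' -> S w -> S w') ->
  measurable S.
Proof.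
move=> satS; apply: (@saturated_measurable _ _ _ (fun w => (nu w, T w, tau w))).
  exact: level_measurable_pair (level_measurable_pair mnu mT) mtau.
by move=> w w' [? ? ?]; exact: satS.
Qed.

Let mB : measurable B.
Proof.
apply: changepoint_measurable => w w' nuw _ tauw.
by rewrite /B /X /delta /= nuw tauw.
Qed.

Let mA1 : measurable A1.
Proof.
apply: changepoint_measurable => w w' nuw _ tauw.
by rewrite /A1 /X /delta /= nuw tauw.
Qed.

Let mA2 : measurable A2.
Proof.
apply: changepoint_measurable => w w' nuw Tw tauw.
by rewrite /A2 /X /Y /delta /= nuw Tw tauw.
Qed.

Let measurable_preimage_X (S : set (\bar R)) : measurable (X @^-1` S).
Proof.
apply: changepoint_measurable => w w' nuw _ tauw.
by rewrite /preimage /X /delta /= nuw tauw.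
Qed.

Let measurable_preimage_Y (S : set (\bar R)) : measurable (Y @^-1` S).
Proof.
apply: changepoint_measurable => w w' nuw Tw _.
by rewrite /preimage /Y /delta /= nuw Tw.
Qed.

Let mX {A : set Omega} : measurable A -> measurable_fun A X.
Proof. by move=> mA _ S _; apply: measurableI mA _. Qed.

Let X_natB {w : Omega} : B w -> exists k : nat, X w = k%:R%:E.
Proof. by case=> nuw Xw; exact: delta_nat. Qed.

Let X_nat {A : set Omega} :
  A `<=` B -> forall w, A w -> exists k : nat, X w = k%:R%:E.
Proof. by move=> AB w /AB; exact: X_natB. Qed.

Lemma ess_max_window : (ess_max P Y < +oo)%E -> (0 < P A1)%E ->
  exists K : nat, [/\ (K%:R%:E <= ess_max P Y)%E,
    P (A1 `&` [set w | (K%:R%:E < X w)%E]) = 0%E &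
    P (A2 `&` [set w | (K%:R%:E < X w)%E]) = 0%E].
Proof.
move=> M_fin A1_pos.
have /set0P[w0 [_ [Xw0_ge0 Xw0_le]]] : A1 != set0.
  by apply: contraTneq A1_pos => ->; rewrite measure0 ltxx.
have M_ge0 := le_trans Xw0_ge0 Xw0_le.
have ME : ess_max P Y = (fine (ess_max P Y))%:E by rewrite fineK // ge0_fin_numE.
have /andP[K_le K_gt] := truncn_itv (fine_ge0 M_ge0).
set K := Num.truncn _ in K_le K_gt *.
exists K; split; first by rewrite ME lee_fin.
  rewrite [E in P E](_ : _ = set0) ?measure0 //.
  apply/seteqP; split => // w [[nuw [Xw_ge0 XwM]] /= KX].
  have [j Xj] := X_natB (conj nuw Xw_ge0).
  move: KX XwM; rewrite Xj ME lte_fin lee_fin ltr_nat => Kj jM.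
  by have := le_lt_trans jM K_gt; rewrite ltr_nat ltnS leqNgt Kj.
apply/eqP; rewrite eq_le measure_ge0 andbT.
rewrite -(ess_max_lt_null P Y K.+1%:R) //; last 3 first.
- by move=> t; exact: (measurable_preimage_Y [set y | (y <= t%:E)%E]).
- exact: (measurable_preimage_Y [set y | (K.+1%:R%:E <= y)%E]).
- by rewrite ME lte_fin.
apply: le_measure; rewrite ?inE //.
- exact: measurableI mA2 (measurable_preimage_X [set x | (K%:R%:E < x)%E]).
- exact: (measurable_preimage_Y [set y | (K.+1%:R%:E <= y)%E]).
move=> w [[nuw [Xw_ge0 XwY]] /= KX]; have [j Xj] := X_natB (conj nuw Xw_ge0).
move: KX; rewrite Xj lte_fin ltr_nat => Kj.
by apply: le_trans XwY; rewrite Xj lee_fin ler_nat.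
Qed.

Let probE (S : set Omega) : measurable S -> P S = (fine (P S))%:E.
Proof. by move=> mS; rewrite fineK // fin_num_measure. Qed.

Let measurable_B_X_eq (k : nat) :
  measurable (B `&` [set w | X w = k%:R%:E]).
Proof. exact: measurableI _ _ mB (measurable_preimage_X [set k%:R%:E]). Qed.

Let measurable_B_Y_ge (k : nat) :
  measurable (B `&` [set w | (k%:R%:E <= Y w)%E]).
Proof.
exact: measurableI _ _ mB (measurable_preimage_Y [set y | (k%:R%:E <= y)%E]).
Qed.

Lemma level_prob_bounded (k : nat) : (k%:R%:E <= ess_max P Y)%E ->
  level_prob P A1 X k = level_prob P B X k.
Proof.
move=> kM; rewrite /level_prob; congr (fine (P _)).
apply/seteqP; split => [w [[nuw [Xw_ge0 _]] Xk]|w [[nuw Xw_ge0] /= Xk]] //.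
by split=> //; split=> //; split=> //; rewrite Xk.
Qed.

Lemma cond_exp_bounded_window {K : nat} : (K%:R%:E <= ess_max P Y)%E ->
  P (A1 `&` [set w | (K%:R%:E < X w)%E]) = 0%E ->
  cond_exp P A1 X = ((\sum_(k < K.+1) k%:R * level_prob P B X k) /
                     (\sum_(k < K.+1) level_prob P B X k))%:E.
Proof.
move=> KM A1_tail; have A1B : A1 `<=` B by move=> w [? []].
rewrite (cond_exp_nat_window mA1 (mX mA1) (X_nat A1B) A1_tail).
congr ((_ / _)%:E); apply: eq_bigr => k _; rewrite level_prob_bounded //.
all: by apply: le_trans KM; rewrite lee_fin ler_nat -ltnS.
Qed.

Lemma level_prob_censored : cond_indep P B X Y -> (0 < P A2)%E ->
  forall k : nat,
  level_prob P A2 X k = level_prob P B X k * cond_survival P B Y k.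
Proof.
move=> indep A2_pos k.
have PB_neq0 : fine (P B) != 0.
  rewrite gt_eqF // -lte_fin -probE //; apply: lt_le_trans A2_pos _.
  by apply: le_measure; rewrite ?inE // => w [? []].
have A2_level : A2 `&` [set w | X w = k%:R%:E] =
    B `&` X @^-1` [set k%:R%:E] `&` Y @^-1` [set y | (k%:R%:E <= y)%E].
  apply/seteqP; split=> [w [[nuw [Xw_ge0 XY]] /= Xk]|w [[[nuw Xw_ge0] Xk] kY]].
    by split=> //=; rewrite -Xk.
  by split=> //; split=> //; split=> //; rewrite Xk.
apply: (mulIf PB_neq0); rewrite /cond_survival mulrA divfK //.
apply: EFin_inj; rewrite !EFinM /level_prob -!probE ?A2_level //.
exact: measurableI _ _ (measurable_B_X_eq k) (measurable_preimage_Y _).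
Qed.

Lemma cond_exp_censored_window {K : nat} : cond_indep P B X Y ->
  (0 < P A2)%E -> P (A2 `&` [set w | (K%:R%:E < X w)%E]) = 0%E ->
  cond_exp P A2 X =
    ((\sum_(k < K.+1) k%:R * (level_prob P B X k * cond_survival P B Y k)) /
     (\sum_(k < K.+1) level_prob P B X k * cond_survival P B Y k))%:E.
Proof.
move=> indep A2_pos A2_tail; have A2B : A2 `<=` B by move=> w [? []].
rewrite (cond_exp_nat_window mA2 (mX mA2) (X_nat A2B) A2_tail).
by congr ((_ / _)%:E); apply: eq_bigr => k _; rewrite level_prob_censored.
Qed.

Lemma cond_survival_nonincr (i j : nat) : (i <= j)%N ->
  cond_survival P B Y j <= cond_survival P B Y i.
Proof.
move=> ij; rewrite /cond_survival ler_wpM2r ?invr_ge0 ?fine_ge0 //.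
rewrite -lee_fin -!probE //; apply: le_measure; rewrite ?inE //.
by move=> w [Bw /= jY]; split=> //=; apply: le_trans jY; rewrite lee_fin ler_nat.
Qed.

End changepoint.

Theorem lemmaB8 (d : measure_display) (Omega : measurableType d) (R : realType)
  (P : probability Omega R)
  (nu : Omega -> option nat) (T tau : Omega -> nat)
  (mnu : @level_measurable d Omega (option nat) nu) (mlen : level_measurable T)
  (mtau : level_measurable tau)
  (hmax : (ess_max P (delta T nu) < +oo)%E)
  (hindep : cond_indep P [set w | nu w <> None /\ (0 <= (delta tau nu w : \bar R))%E]
              (delta tau nu) (delta T nu))
  (hpos1 : (0 < P [set w | nu w <> None /\
              (0 <= (delta tau nu w : \bar R))%E /\
              (delta tau nu w <= ess_max P (delta T nu))%E])%E)
  (hpos2 : (0 < P [set w | nu w <> None /\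
              (0 <= (delta tau nu w : \bar R))%E /\
              ((delta tau nu w : \bar R) <= delta T nu w)%E])%E) :
  (0 <= cond_exp P [set w | nu w <> None /\
              (0 <= (delta tau nu w : \bar R))%E /\
              (delta tau nu w <= ess_max P (delta T nu))%E] (delta tau nu)
      - cond_exp P [set w | nu w <> None /\
              (0 <= (delta tau nu w : \bar R))%E /\
              ((delta tau nu w : \bar R) <= delta T nu w)%E] (delta tau nu))%E.
Proof.
have [K [KM A1_tail A2_tail]] := ess_max_window mnu mlen mtau hmax hpos1.
rewrite (cond_exp_bounded_window mnu mlen mtau KM A1_tail).
rewrite (cond_exp_censored_window mnu mlen mtau hindep hpos2 A2_tail).
rewrite -EFinB lee_fin subr_ge0; apply: reweighted_mean_le_nonincr.
- by move=> k; exact: fine_ge0.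
- by move=> k; rewrite divr_ge0 ?fine_ge0.
- exact: cond_survival_nonincr mnu mlen mtau.
Qed.
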